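(* Let $(P,\preceq)$ be a poset and $\mathcal{X}:=\{X\subseteq P\mid (X,\preceq)\text{ is well-ordered}\}$. Let $f:\mathcal{X}\to\mathcal{X}$ satisfy: for all $X,X'\in\mathcal{X}$ and all $y\in f(X)\mathbin{\triangle}f(X')$ there exists $x\in X\mathbin{\triangle}X'$ with $x\prec y$. Then $f$ has a unique fixed point. Moreover, this fixed point equals $X_{\hat\alpha}$ for some ordinal $\hat\alpha$, where $X_0=\emptyset$; for every ordinal $\alpha$, $X_{\alpha+1}=X_\alpha$ if $f(X_\alpha)\setminus X_\alpha=\emptyset$ and $X_{\alpha+1}=X_\alpha\cup\{\min(f(X_\alpha)\setminus X_\alpha)\}$ otherwise; and for nonzero limit ordinals $\alpha$, $X_\alpha=\bigcup_{\beta<\alpha}X_\beta$.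
   Context: $X\mathbin{\triangle}Y=(X\setminus Y)\cup(Y\setminus X)$ is the symmetric difference. $x\prec y$ means $x\preceq y$ and $x\neq y$. A poset is well-ordered if every nonempty subset has a least element. *)

From mathcomp Require Import all_boot all_order.
Set Implicit Arguments. Unset Strict Implicit. Unset Printing Implicit Defensive.
Import Order.Theory.
Local Open Scope order_scope.

Section Defs.
Context {d : Order.disp_t} {P : porderType d}.

Definition well_ordered (X : P -> Prop) : Prop :=
  forall S : P -> Prop, (forall x, S x -> X x) -> (exists x, S x) ->
    exists m, S m /\ forall s, S s -> m <= s.

Definition WO := {X : P -> Prop | well_ordered X}.

Definition symdiff (X Y : P -> Prop) : P -> Prop :=
  fun x => (X x /\ ~ Y x) \/ (Y x /\ ~ X x).

Definition contractive (f : WO -> WO) : Prop :=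
  forall (X X' : WO) (y : P), symdiff (sval (f X)) (sval (f X')) y ->
    exists x, symdiff (sval X) (sval X') x /\ x < y.

Definition is_min (S : P -> Prop) (m : P) : Prop :=
  S m /\ forall s, S s -> m <= s.

(* B = X_{alpha+1} when A = X_alpha *)
Definition succ_step (f : WO -> WO) (A B : WO) : Prop :=
  let D := fun x => sval (f A) x /\ ~ sval A x in
  ((forall x, ~ D x) /\ sval B = sval A) \/
  (exists m, is_min D m /\ sval B = (fun x => sval A x \/ x = m)).

End Defs.

(* lt is a strict well-order on I (I together with lt represents an ordinal) *)
Definition strict_wellorder (I : Type) (lt : I -> I -> Prop) : Prop :=
  (forall i, ~ lt i i) /\
  (forall i j k, lt i j -> lt j k -> lt i k) /\
  (forall i j, lt i j \/ i = j \/ lt j i) /\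
  well_founded lt.

Definition transfinite_iter {d : Order.disp_t} {P : porderType d}
    (f : @WO d P -> @WO d P) (I : Type) (lt : I -> I -> Prop)
    (X : I -> @WO d P) : Prop :=
  forall i,
    ((forall j, ~ lt j i) -> sval (X i) = (fun _ => False)) /\
    (forall j, lt j i -> (forall k, ~ (lt j k /\ lt k i)) ->
       succ_step f (X j) (X i)) /\
    ((exists j, lt j i) -> (forall j, lt j i -> exists k, lt j k /\ lt k i) ->
       sval (X i) = (fun x => exists j, lt j i /\ sval (X j) x)).

From mathcomp Require Import all_boot all_order.
From Stdlib Require Import Classical FunctionalExtensionality PropExtensionality ProofIrrelevance.
Set Implicit Arguments. Unset Strict Implicit. Unset Printing Implicit Defensive.
Import Order.Theory.
Local Open Scope order_scope.

(* Call G in 𝒳 an f-chain if every j in G is the least element of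
   f(G_{<j}) \ G_{<j}; these are the stages of the transfinite recursion.
   Two f-chains agree up to the first point where they differ, and the
   successor step forces that point to be the same on both sides, so one is
   an initial segment of the other and their union U is again an f-chain.
   Contractivity gives G ⊆ f(G) for every f-chain G and puts f(G) \ G above G,
   so adjoining min (f(U) \ U) would give a longer f-chain: U is a fixed point.
   Conversely a fixed point Z is an f-chain, and an f-chain not contained in Z
   would have Z as an initial segment and hence contain an element of
   f(Z) \ Z; this gives uniqueness. The initial segments of Z, indexed by the
   elements of Z and a top element, form the transfinite sequence. *)

Section StrictWellorder.
Variables (I : Type) (lt : I -> I -> Prop).

Definition lt_top (i j : option I) : Prop :=
  match i, j with
  | Some a, Some b => lt a b
  | Some _, None => True
  | None, _ => False
  end.

Lemma strict_wellorder_lt_top : strict_wellorder lt -> strict_wellorder lt_top.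
Proof.
move=> [irr [trans [tot wf]]]; split; [|split; [|split]].
- by case.
- by case=> [a|] [b|] [c|] //=; apply: trans.
- case=> [a|] [b|] /=; [|by left|by right; right|by right; left].
  by case: (tot a b) => [|[->|]]; auto.
- have accS a : Acc lt_top (Some a).
    elim: (wf a) => {}a _ IH; constructor; case=> // b; exact: IH.
  by constructor; case=> // a _; apply: accS.
Qed.

End StrictWellorder.

Section WellOrderedSubsets.
Context {d : Order.disp_t} {P : porderType d}.
Implicit Types (A B S X : P -> Prop) (G H : @WO d P).

Lemma pred_ext A B : (forall x, A x <-> B x) -> A = B.
Proof.
by move=> AB; apply: functional_extensionality => x; apply: propositional_extensionality.
Qed.

Lemma WO_ext G H : (forall x, sval G x <-> sval H x) -> G = H.
Proof.
by move=> GH; apply: eq_sig_hprop => [x p q|]; [exact: proof_irrelevance | exact: pred_ext].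
Qed.

Lemma is_min_unique S a b : is_min S a -> is_min S b -> a = b.
Proof. by move=> [Sa minA] [Sb minB]; apply/eqP; rewrite eq_le minA ?minB. Qed.

Lemma well_ordered_sub X S : well_ordered X -> (forall x, S x -> X x) -> well_ordered S.
Proof. by move=> woX SX T TS; apply: woX => x /TS /SX. Qed.

Lemma well_ordered_min X S x :
  well_ordered X -> (forall y, S y -> X y) -> S x -> exists m, is_min S m.
Proof. by move=> woX SX Sx; apply: woX SX _; exists x. Qed.

Lemma well_ordered_comparable X a b : well_ordered X -> X a -> X b -> a >=< b.
Proof.
move=> woX Xa Xb.
have abX x : x = a \/ x = b -> X x by case=> ->.
have [m [[->|->] minm]] := well_ordered_min woX abX (or_introl erefl).
- by rewrite /Order.comparable minm //; right.
- by rewrite /Order.comparable (minm a) ?orbT //; left.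
Qed.

Lemma well_ordered_leNgt X a b : well_ordered X -> X a -> X b -> (a <= b) = ~~ (b < a).
Proof. by move=> woX Xa Xb; rewrite comparable_leNgt // (well_ordered_comparable woX Xa Xb). Qed.

Lemma strict_wellorder_well_ordered X :
  well_ordered X -> strict_wellorder (fun a b : {x | X x} => sval a < sval b).
Proof.
move=> woX; split; [|split; [|split]].
- by move=> a; rewrite ltxx.
- by move=> a b c; apply: lt_trans.
- move=> a b.
  case: (comparable_ltgtP (well_ordered_comparable woX (svalP a) (svalP b))) => ab; auto.
  by right; left; apply: eq_sig_hprop => // x p q; apply: proof_irrelevance.
- move=> a; apply: NNPP => na.
  pose S x := exists a : {x | X x}, sval a = x /\ ~ Acc (fun a b => sval a < sval b) a.
  have SX x : S x -> X x by move=> [c [<- _]]; apply: svalP.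
  have [m [[c [<- nc]] minm]] := well_ordered_min woX SX (ex_intro _ a (conj erefl na)).
  apply: nc; constructor => b ba; apply: NNPP => nb.
  by have := lt_le_trans ba (minm _ (ex_intro _ b (conj erefl nb))); rewrite ltxx.
Qed.

Definition below G j : @WO d P :=
  exist _ (fun x => sval G x /\ x < j)
    (well_ordered_sub (svalP G) (fun x (Gx : sval G x /\ x < j) => proj1 Gx)).

Definition initial_seg A B : Prop :=
  (forall x, A x -> B x) /\ (forall x y, B x -> A y -> x < y -> A x).

Lemma initial_seg_below_min A B m : well_ordered B -> initial_seg A B ->
  is_min (fun x => B x /\ ~ A x) m -> forall x, B x /\ x < m <-> A x.
Proof.
move=> woB [AB closedA] [[Bm nAm] minm] x; split=> [[Bx xm]|Ax].
- apply: NNPP => nAx.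
  by have := lt_le_trans xm (minm x (conj Bx nAx)); rewrite ltxx.
- split; first exact: AB.
  case: (comparable_ltgtP (well_ordered_comparable woB (AB x Ax) Bm)) => // [mx|xm].
  + by case: nAm; apply: closedA mx.
  + by case: nAm; rewrite -xm.
Qed.

Definition agree A B : P -> Prop :=
  fun x => A x /\ B x /\ forall y, y < x -> A y <-> B y.

Lemma agree_sym A B : agree A B = agree B A.
Proof. by apply: pred_ext => x; split=> -[Ax [Bx AB]]; do 2!split=> //; move=> y /AB []; split. Qed.

Lemma initial_seg_agree A B : initial_seg (agree A B) A.
Proof.
split=> [x [] //|x y Ax [_ [_ AB]] xy].
split=> //; split; first exact/AB.
by move=> z zx; apply: AB (lt_trans zx xy).
Qed.

Lemma agree_initial_seg A B : (forall x, A x -> agree A B x) -> initial_seg A B.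
Proof. by move=> Aagree; split=> [x /Aagree[_ []] //|x y Bx /Aagree[_ [_ AB]] xy]; apply/AB. Qed.

Section Bigcup.
Variable F : @WO d P -> Prop.
Hypothesis F_nested : forall G H, F G -> F H ->
  initial_seg (sval G) (sval H) \/ initial_seg (sval H) (sval G).

Definition bigcup_wo : P -> Prop := fun x => exists G, F G /\ sval G x.

Lemma initial_seg_bigcup G : F G -> initial_seg (sval G) bigcup_wo.
Proof.
move=> FG; split=> [x Gx|x y [H [FH Hx]] Gy xy]; first by exists G.
by case: (F_nested FG FH) => [[GH closedG]|[HG _]]; [apply: closedG xy | apply: HG].
Qed.

Lemma bigcup_comparable x y : bigcup_wo x -> bigcup_wo y -> x >=< y.
Proof.
move=> [G [FG Gx]] [H [FH Hy]].
case: (F_nested FG FH) => [[GH _]|[HG _]].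
- exact: well_ordered_comparable (svalP H) (GH _ Gx) Hy.
- exact: well_ordered_comparable (svalP G) Gx (HG _ Hy).
Qed.

Lemma well_ordered_bigcup : well_ordered bigcup_wo.
Proof.
move=> S SU [s Ss].
have [G [FG Gs]] := SU s Ss.
have [m [[Sm Gm] minm]] := well_ordered_min (S := fun x => S x /\ sval G x)
  (svalP G) (fun _ => @proj2 _ _) (conj Ss Gs).
exists m; split=> // y Sy.
rewrite comparable_leNgt; last exact: bigcup_comparable (SU _ Sm) (SU _ Sy).
apply/negP => ym.
have Gy := (initial_seg_bigcup FG).2 y m (SU _ Sy) Gm ym.
by have := lt_le_trans ym (minm y (conj Sy Gy)); rewrite ltxx.
Qed.

End Bigcup.

End WellOrderedSubsets.

Section ContractiveMap.
Context {d : Order.disp_t} {P : porderType d}.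
Variable f : @WO d P -> @WO d P.
Implicit Types (G H Z : @WO d P).

Definition fresh G : P -> Prop := fun x => sval (f G) x /\ ~ sval G x.

Definition fchain G : Prop := forall j, sval G j -> is_min (fresh (below G j)) j.

Lemma fchain_comparable G H : fchain G -> fchain H ->
  initial_seg (sval G) (sval H) \/ initial_seg (sval H) (sval G).
Proof.
move=> chG chH.
case: (classic (forall x, sval G x -> agree (sval G) (sval H) x)) => [GE|].
  by left; apply: agree_initial_seg.
move=> /not_all_ex_not[x0 nx0]; have [Gx0 nEx0] := imply_to_and _ _ nx0.
case: (classic (forall x, sval H x -> agree (sval G) (sval H) x)) => [HE|].
  by right; apply: agree_initial_seg; rewrite agree_sym.
move=> /not_all_ex_not[y0 ny0]; have [Hy0 nEy0] := imply_to_and _ _ ny0; exfalso.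
have [a amin] := well_ordered_min (svalP G) (fun _ => @proj1 _ _) (conj Gx0 nEx0).
have [b bmin] := well_ordered_min (svalP H) (fun _ => @proj1 _ _) (conj Hy0 nEy0).
have belowGa := initial_seg_below_min (svalP G) (initial_seg_agree _ _) amin.
have segH : initial_seg (agree (sval G) (sval H)) (sval H).
  by rewrite agree_sym; apply: initial_seg_agree.
have belowHb := initial_seg_below_min (svalP H) segH bmin.
have [[Ga nEa] _] := amin; have [[Hb _] _] := bmin.
have below_ab : below G a = below H b.
  by apply: WO_ext => x; apply: iff_trans (belowGa x) (iff_sym (belowHb x)).
have ab : a = b by apply: is_min_unique (chG a Ga) _; rewrite below_ab; apply: chH.
subst b; apply: nEa; do 2!split=> //; move=> y ya; split=> [Gy|Hy].
- by have [_ []] := (belowGa y).1 (conj Gy ya).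
- by have [] := (belowHb y).1 (conj Hy ya).
Qed.

Definition fchain_union : @WO d P :=
  exist _ (bigcup_wo fchain) (well_ordered_bigcup (@fchain_comparable)).

Lemma fchain_union_fchain : fchain fchain_union.
Proof.
move=> j [G [chG Gj]].
have [GU closedG] := initial_seg_bigcup (@fchain_comparable) chG.
have -> : below fchain_union j = below G j.
  apply: WO_ext => x /=; split=> -[Ux xj]; split=> //; [exact: closedG Ux Gj xj | exact: GU].
exact: chG.
Qed.

Section Stages.
Variable Z : @WO d P.

Definition stage_lt := lt_top (fun a b : {x | sval Z x} => sval a < sval b).

Definition stage (i : option {x | sval Z x}) : @WO d P :=
  if i is Some a then below Z (sval a) else Z.

Lemma strict_wellorder_stage_lt : strict_wellorder stage_lt.
Proof. exact/strict_wellorder_lt_top/strict_wellorder_well_ordered/svalP. Qed.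

Lemma stage_sub i x : sval (stage i) x -> sval Z x.
Proof. by case: i => [a [Zx _]|]. Qed.

Lemma stage_spec i x (Zx : sval Z x) :
  sval (stage i) x <-> stage_lt (Some (exist _ x Zx)) i.
Proof. by case: i => [a|] /=; split=> // -[]. Qed.

Lemma stage_bottom i : (forall j, ~ stage_lt j i) -> sval (stage i) = (fun _ => False).
Proof.
move=> bot; apply: pred_ext => x; split=> // six.
exact: bot _ ((stage_spec i (stage_sub six)).1 six).
Qed.

Lemma stage_succ i j : fchain Z -> stage_lt j i ->
  (forall k, ~ (stage_lt j k /\ stage_lt k i)) -> succ_step f (stage j) (stage i).
Proof.
have [_ [stage_lt_trans [stage_lt_total _]]] := strict_wellorder_stage_lt.
case: j => [[a Za]|] chZ ji nk //; right; exists a; split; first exact: chZ.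
apply: pred_ext => x; split=> [six|[sjx|->]].
- have Zx := stage_sub six; have xi := (stage_spec i Zx).1 six.
  case: (stage_lt_total (Some (exist _ x Zx)) (Some (exist _ a Za))) => [xa|[[->]|ax]].
  + by left; apply/(stage_spec _ Zx).
  + by right.
  + by case: (nk _ (conj ax xi)).
- have Zx := stage_sub sjx.
  by apply/(stage_spec _ Zx); apply: stage_lt_trans ji; apply/(stage_spec _ Zx).
- exact/(stage_spec _ Za).
Qed.

Lemma stage_limit i : (forall j, stage_lt j i -> exists k, stage_lt j k /\ stage_lt k i) ->
  sval (stage i) = (fun x => exists j, stage_lt j i /\ sval (stage j) x).
Proof.
have [_ [stage_lt_trans _]] := strict_wellorder_stage_lt.
move=> lim; apply: pred_ext => x; split=> [six|[j [ji sjx]]].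
- have Zx := stage_sub six.
  have [k [xk ki]] := lim _ ((stage_spec i Zx).1 six).
  by exists k; split=> //; apply/(stage_spec _ Zx).
- have Zx := stage_sub sjx.
  by apply/(stage_spec _ Zx); apply: stage_lt_trans ji; apply/(stage_spec _ Zx).
Qed.

Lemma stage_transfinite_iter : fchain Z -> transfinite_iter f stage_lt stage.
Proof.
move=> chZ i; split; first exact: stage_bottom.
by split=> [j|_]; [exact: stage_succ | exact: stage_limit].
Qed.

End Stages.

Hypothesis f_contractive : contractive f.

Lemma contractive_below G j y : sval G j ->
  symdiff (sval (f G)) (sval (f (below G j))) y -> j < y.
Proof.
move=> Gj /f_contractive[x [[[Gx nx]|[[Gx _] /(_ Gx) []]] xy]].
apply: le_lt_trans xy; rewrite (well_ordered_leNgt (svalP G) Gj Gx).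
by apply/negP => xj; apply: nx.
Qed.

Lemma fchain_sub_f G : fchain G -> forall j, sval G j -> sval (f G) j.
Proof.
move=> chG j Gj; have [[fbj _] _] := chG j Gj.
apply: NNPP => nfj.
by have := contractive_below Gj (or_intror (conj fbj nfj)); rewrite ltxx.
Qed.

Lemma fchain_lt_fresh G j y : fchain G -> sval G j -> fresh G y -> j < y.
Proof.
move=> chG Gj [fy nGy].
case: (classic (sval (f (below G j)) y)) => [fby|nfby]; last first.
  exact: contractive_below Gj (or_introl (conj fy nfby)).
have [_ minj] := chG j Gj.
rewrite lt_neqAle minj ?andbT; last by split=> // -[].
by apply/eqP => jy; apply: nGy; rewrite -jy.
Qed.

Lemma fchain_succ G G' m : fchain G -> is_min (fresh G) m ->
  (forall x, sval G' x <-> sval G x \/ x = m) -> fchain G'.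
Proof.
move=> chG mmin G'E; have [freshm _] := mmin.
have G_lt_m x : sval G x -> x < m by move=> Gx; apply: fchain_lt_fresh chG Gx freshm.
move=> j /G'E[Gj|->].
- have -> : below G' j = below G j.
    apply: WO_ext => x /=; split=> [[/G'E[Gx|->] xj] //|[Gx xj]].
      by have := lt_trans xj (G_lt_m j Gj); rewrite ltxx.
    by split=> //; apply/G'E; left.
  exact: chG.
- have -> : below G' m = G.
    apply: WO_ext => x /=; split=> [[/G'E[Gx|->]] //|Gx]; first by rewrite ltxx.
    by split; [apply/G'E; left | exact: G_lt_m].
  exact: mmin.
Qed.

Lemma fixed_fchain Z : f Z = Z -> fchain Z.
Proof.
move=> fZ j Zj; have fZj : sval (f Z) j by rewrite fZ.
have fbj : sval (f (below Z j)) j.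
  apply: NNPP => nfbj.
  by have := contractive_below Zj (or_introl (conj fZj nfbj)); rewrite ltxx.
split=> [|y [fby nby]]; first by split=> // -[_]; rewrite ltxx.
case: (classic (sval Z y)) => [Zy|nZy].
- rewrite (well_ordered_leNgt (svalP Z) Zj Zy).
  by apply/negP => yj; apply: nby.
- by apply/ltW/(contractive_below Zj); right; rewrite fZ.
Qed.

Lemma fchain_sub_fixed Z G : f Z = Z -> fchain G -> forall x, sval G x -> sval Z x.
Proof.
move=> fZ chG.
case: (fchain_comparable chG (fixed_fchain fZ)) => [[GZ _] //|ZG x Gx].
apply: NNPP => nZx.
have [m mmin] := well_ordered_min (svalP G) (fun _ => @proj1 _ _) (conj Gx nZx).
have [[Gm nZm] _] := mmin.
have belowGm : below G m = Z.
  by apply: WO_ext; apply: initial_seg_below_min (svalP G) ZG mmin.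
have [[fZm _] _] := chG m Gm.
by apply: nZm; rewrite -fZ -belowGm.
Qed.

Lemma fixed_point_unique Z Z' : f Z = Z -> f Z' = Z' -> Z = Z'.
Proof.
move=> fZ fZ'; apply: WO_ext => x.
by split; apply: fchain_sub_fixed; [|apply: fixed_fchain| |apply: fixed_fchain].
Qed.

Lemma fchain_union_fixed : f fchain_union = fchain_union.
Proof.
set U := fchain_union; have chU : fchain U := fchain_union_fchain.
apply: WO_ext => x; split=> [fUx|]; last exact: fchain_sub_f.
apply: NNPP => nUx.
have [m mmin] := well_ordered_min (svalP (f U)) (fun _ => @proj1 _ _) (conj fUx nUx).
have [[fUm nUm] _] := mmin.
have UmfU y : sval U y \/ y = m -> sval (f U) y by case=> [/(fchain_sub_f chU)|->].
pose G' : @WO d P := exist _ _ (well_ordered_sub (svalP (f U)) UmfU).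
apply: nUm; exists G'; split; last by right.
by apply: (fchain_succ (G' := G') chU mmin).
Qed.

End ContractiveMap.

Theorem theorem6p2 (d : Order.disp_t) (P : porderType d)
  (f : @WO d P -> @WO d P) :
  contractive f ->
  (exists! Z : @WO d P, f Z = Z) /\
  (forall Z : @WO d P, f Z = Z ->
     exists (I : Type) (lt : I -> I -> Prop) (X : I -> @WO d P) (alpha : I),
       strict_wellorder lt /\ transfinite_iter f lt X /\ X alpha = Z).
Proof.
move=> f_contractive; split.
- exists (fchain_union f); split; first exact: fchain_union_fixed.
  by move=> Z fZ; exact: (fixed_point_unique f_contractive (fchain_union_fixed f_contractive) fZ).
- move=> Z fZ; exists _, (stage_lt (Z:=Z)), (stage (Z:=Z)), None.
  split; first exact: strict_wellorder_stage_lt.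
  by split=> //; apply/stage_transfinite_iter/fixed_fchain.
Qed.
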